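(* Let $g\geq 2$. For pairwise distinct $\alpha,\beta,\gamma\in\{a_1,\dots,a_g,b_1,\dots,b_g\}$, the family $V_{\alpha,\beta,\gamma}=((V_{\alpha,\beta,\gamma})_c)_c\in\mathfrak t_{(g)}(2)^{\times 2g}$ defined by \[ (V_{\alpha,\beta,\gamma})_c=\begin{cases} -\langle\alpha,\alpha^*\rangle\big([z_\beta^{(1)},z_\gamma^{(1)}]+2\langle\beta,\gamma\rangle t_{11}\big) & c=\alpha^*,\\ \langle\beta,\beta^*\rangle\big([z_\alpha^{(1)},z_\gamma^{(1)}]+2\langle\alpha,\gamma\rangle t_{11}\big) & c=\beta^*,\\ -\langle\gamma,\gamma^*\rangle\big([z_\alpha^{(1)},z_\beta^{(1)}]+2\langle\alpha,\beta\rangle t_{11}\big) & c=\gamma^*,\\ 0 & \text{otherwise} \end{cases} \] lies in $Z_{(g)}$.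
   Context: $\mathbb K$ is a field of characteristic zero. On $\{a_1,\dots,a_g,b_1,\dots,b_g\}$ the pairing is $\langle a_i,b_i\rangle=-\langle b_i,a_i\rangle=-1$ and zero on other pairs; the Poincaré dual is $a_i^*=b_i$, $b_i^*=a_i$. For $c\in\{a_i,b_i\}$, $z_c^{(1)}\in\mathfrak t_{(g)}(2)$ denotes $x_i^{(1)}$ if $c=a_i$ and $y_i^{(1)}$ if $c=b_i$. For $n\ge1$, $\mathfrak t_{(g)}(n)$ is the Lie algebra generated by $x_l^{(i)},y_l^{(i)},t_{ij}$ ($1\le i,j\le n$, $1\le l\le g$) with relations: all $t_{ii}$ central; $t_{ij}=t_{ji}$; $[t_{ij},t_{kl}]=0$ for $i,j,k,l$ distinct; $[t_{ik}+t_{kj},t_{ij}]=0$ for $i,j,k$ distinct; $[x_l^{(i)},x_k^{(j)}]=[y_l^{(i)},y_k^{(j)}]=0$ for $i\ne j$; $[x_k^{(i)},y_l^{(j)}]=0$ for $i\neq j,k\neq l$; $[x_k^{(i)},y_k^{(j)}]=t_{ij}$ for $i\neq j$; $\sum_{k=1}^g[x_k^{(i)},y_k^{(i)}]=-\sum_{j\neq i}t_{ij}-(2-2g)t_{ii}$. For $\phi:\{1,\dots,m\}\to\{1,\dots,n\}$, $\theta\mapsto\theta^\phi$ is the Lie morphism with $t_{ij}\mapsto\sum_{i'\in\phi^{-1}(i),j'\in\phi^{-1}(j)}t_{i'j'}$ ($i\ne j$), $t_{ii}\mapsto\sum_{i'\in\phi^{-1}(i)}t_{i'i'}+\frac12\sum_{i'\ne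 j'\in\phi^{-1}(i)}t_{i'j'}$, $x_l^{(i)}\mapsto\sum_{i'\in\phi^{-1}(i)}x_l^{(i')}$, $y_l^{(i)}\mapsto\sum_{i'\in\phi^{-1}(i)}y_l^{(i')}$, written $\theta^{I_1,\dots,I_n}$ with $I_k=\phi^{-1}(k)$. $Z_{(g)}$ is the set of families $(U_c)_{c}\in\mathfrak t_{(g)}(2)^{\times 2g}$, $c\in\{a_1,\dots,b_g\}$, such that: for every $c$ there is $u_c\in\mathfrak t_{(g)}(1)$ with $u_c^{12}=U_c^{1,2}+U_c^{2,1}$; $U_c^{12,3}-U_c^{1,23}-U_c^{2,13}=0$ for all $c$; $[U_{a_i}^{1,23},y_j^{(2)}]-[U_{b_j}^{2,13},x_i^{(1)}]=0$ for all $i,j$; for $i<j$, $[U_{a_i}^{1,23},x_j^{(2)}]-[U_{a_j}^{2,13},x_i^{(1)}]=0$ and $[U_{b_i}^{1,23},y_j^{(2)}]-[U_{b_j}^{2,13},y_i^{(1)}]=0$; $\sum_{i=1}^g[U_{a_i}^{1,23},y_i^{(1)}]-[U_{b_i}^{1,23},x_i^{(1)}]=0$. *)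

From mathcomp Require Import all_boot all_algebra.
Set Implicit Arguments. Unset Strict Implicit. Unset Printing Implicit Defensive.
Import GRing.Theory.
Local Open Scope ring_scope.

Inductive lterm (K : Type) (G : Type) : Type :=
| Lzero : lterm K G
| Lgen : G -> lterm K G
| Ladd : lterm K G -> lterm K G -> lterm K G
| Lscale : K -> lterm K G -> lterm K G
| Lbr : lterm K G -> lterm K G -> lterm K G.
Arguments Lzero {K G}. Arguments Lgen {K G}. Arguments Ladd {K G}.
Arguments Lscale {K G}. Arguments Lbr {K G}.

Definition Lsub (K : pzRingType) G (x y : lterm K G) := Ladd x (Lscale (-1) y).
Definition tsum (K : Type) G (s : seq (lterm K G)) := foldr (@Ladd K G) (@Lzero K G) s.

(* Congruence generated by the Lie algebra axioms and the relations [rel]: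
   lterm K G / lie_eq rel is the Lie algebra presented by generators G
   and relations rel. *)
Inductive lie_eq (K : fieldType) G (rel : lterm K G -> lterm K G -> Prop)
  : lterm K G -> lterm K G -> Prop :=
| le_rel x y : rel x y -> lie_eq rel x y
| le_refl x : lie_eq rel x x
| le_sym x y : lie_eq rel x y -> lie_eq rel y x
| le_trans x y z : lie_eq rel x y -> lie_eq rel y z -> lie_eq rel x z
| le_add x x' y y' : lie_eq rel x x' -> lie_eq rel y y' ->
    lie_eq rel (Ladd x y) (Ladd x' y')
| le_scale a x x' : lie_eq rel x x' -> lie_eq rel (Lscale a x) (Lscale a x')
| le_br x x' y y' : lie_eq rel x x' -> lie_eq rel y y' ->
    lie_eq rel (Lbr x y) (Lbr x' y')
| le_addA x y z : lie_eq rel (Ladd x (Ladd y z)) (Ladd (Ladd x y) z)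
| le_addC x y : lie_eq rel (Ladd x y) (Ladd y x)
| le_add0 x : lie_eq rel (Ladd x Lzero) x
| le_scale1 x : lie_eq rel (Lscale 1 x) x
| le_scale0 x : lie_eq rel (Lscale 0 x) Lzero
| le_scaleDl a b x : lie_eq rel (Lscale (a + b) x) (Ladd (Lscale a x) (Lscale b x))
| le_scaleDr a x y : lie_eq rel (Lscale a (Ladd x y)) (Ladd (Lscale a x) (Lscale a y))
| le_scaleA a b x : lie_eq rel (Lscale a (Lscale b x)) (Lscale (a * b) x)
| le_brDl x y z : lie_eq rel (Lbr (Ladd x y) z) (Ladd (Lbr x z) (Lbr y z))
| le_brDr x y z : lie_eq rel (Lbr x (Ladd y z)) (Ladd (Lbr x y) (Lbr x z))
| le_brZl a x y : lie_eq rel (Lbr (Lscale a x) y) (Lscale a (Lbr x y))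
| le_brZr a x y : lie_eq rel (Lbr x (Lscale a y)) (Lscale a (Lbr x y))
| le_brxx x : lie_eq rel (Lbr x x) Lzero
| le_jacobi x y z : lie_eq rel
    (Ladd (Ladd (Lbr x (Lbr y z)) (Lbr y (Lbr z x))) (Lbr z (Lbr x y))) Lzero.

Fixpoint lmap K G1 G2 (f : G1 -> lterm K G2) (t : lterm K G1) : lterm K G2 :=
  match t with
  | Lzero => Lzero
  | Lgen x => f x
  | Ladd x y => Ladd (lmap f x) (lmap f y)
  | Lscale a x => Lscale a (lmap f x)
  | Lbr x y => Lbr (lmap f x) (lmap f y)
  end.

(* ---------- The Lie algebra t_(g)(n) (indices are 0-based) ---------- *)
Inductive tgen (g n : nat) : Type :=
| GT : 'I_n -> 'I_n -> tgen g n
| GX : 'I_g -> 'I_n -> tgen g n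
| GY : 'I_g -> 'I_n -> tgen g n.
Arguments GT {g n}. Arguments GX {g n}. Arguments GY {g n}.

Section T.
Variables (K : fieldType) (g n : nat).
Notation tt := (lterm K (tgen g n)).
Definition tT i j : tt := Lgen (GT i j).
Definition tX l i : tt := Lgen (GX l i).
Definition tY l i : tt := Lgen (GY l i).

Inductive trel : tt -> tt -> Prop :=
| tr_central i (x : tgen g n) : trel (Lbr (tT i i) (Lgen x)) Lzero
| tr_sym i j : trel (tT i j) (tT j i)
| tr_4T i j k l : [&& i != j, i != k, i != l, j != k, j != l & k != l] ->
    trel (Lbr (tT i j) (tT k l)) Lzero
| tr_4T3 i j k : [&& i != j, i != k & j != k] ->
    trel (Lbr (Ladd (tT i k) (tT k j)) (tT i j)) Lzero
| tr_xx l k i j : i != j -> trel (Lbr (tX l i) (tX k j)) Lzero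
| tr_yy l k i j : i != j -> trel (Lbr (tY l i) (tY k j)) Lzero
| tr_xy k l i j : i != j -> k != l -> trel (Lbr (tX k i) (tY l j)) Lzero
| tr_xyT k i j : i != j -> trel (Lbr (tX k i) (tY k j)) (tT i j)
| tr_diag i : trel (tsum [seq Lbr (tX k i) (tY k i) | k <- enum 'I_g])
    (Ladd (Lscale (-1) (tsum [seq tT i j | j <- enum 'I_n & j != i]))
          (Lscale (- (2 - 2 * g%:R)) (tT i i))).

Definition teq (x y : tt) : Prop := lie_eq trel x y.
End T.

Definition coface_gen (K : fieldType) (g m n : nat) (phi : 'I_m -> 'I_n)
    (x : tgen g n) : lterm K (tgen g m) :=
  match x with
  | GT i j =>
      if i == j then
        Ladd (tsum [seq tT K g i' i' | i' <- enum 'I_m & phi i' == i])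
             (Lscale (2%:R^-1)
                (tsum (flatten [seq [seq tT K g i' j' | j' <- enum 'I_m &
                                       (phi j' == i) && (j' != i')]
                               | i' <- enum 'I_m & phi i' == i])))
      else tsum (flatten [seq [seq tT K g i' j' | j' <- enum 'I_m & phi j' == j]
                         | i' <- enum 'I_m & phi i' == i])
  | GX l i => tsum [seq tX K l i' | i' <- enum 'I_m & phi i' == i]
  | GY l i => tsum [seq tY K l i' | i' <- enum 'I_m & phi i' == i]
  end.

Definition coface (K : fieldType) (g m n : nat) (phi : 'I_m -> 'I_n) :
  lterm K (tgen g n) -> lterm K (tgen g m) := lmap (coface_gen K phi).

(* the specific maps used (0-based: paper's index k is k-1 here) *)
Definition i2_0 : 'I_2 := ord0.
Definition i2_1 : 'I_2 := ord_max.
Definition i3_0 : 'I_3 := ord0.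
Definition i3_1 : 'I_3 := inord 1.
Definition i3_2 : 'I_3 := ord_max.
Definition phi_12 (i : 'I_2) : 'I_1 := ord0.
Definition phi_1_2 (i : 'I_2) : 'I_2 := i.
Definition phi_2_1 (i : 'I_2) : 'I_2 := if i == i2_0 then i2_1 else i2_0.
Definition phi_12_3 (i : 'I_3) : 'I_2 := if i == i3_2 then i2_1 else i2_0.
Definition phi_1_23 (i : 'I_3) : 'I_2 := if i == i3_0 then i2_0 else i2_1.
Definition phi_2_13 (i : 'I_3) : 'I_2 := if i == i3_1 then i2_0 else i2_1.

(* ---------- symplectic basis {a_1..a_g,b_1..b_g}: (i,false)=a_i, (i,true)=b_i ---------- *)
Definition abasis (g : nat) := ('I_g * bool)%type.
Definition pairing (K : fieldType) g (c d : abasis g) : K :=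
  if c.1 == d.1 then
    (if ~~ c.2 && d.2 then -1 else if c.2 && ~~ d.2 then 1 else 0)
  else 0.
Definition pdual g (c : abasis g) : abasis g := (c.1, ~~ c.2).
Definition zc (K : fieldType) g (c : abasis g) : lterm K (tgen g 2) :=
  if c.2 then tY K c.1 i2_0 else tX K c.1 i2_0.
Definition a_ g (i : 'I_g) : abasis g := (i, false).
Definition b_ g (i : 'I_g) : abasis g := (i, true).

Definition inZ (K : fieldType) (g : nat) (U : abasis g -> lterm K (tgen g 2)) : Prop :=
  [/\ (forall c, exists u : lterm K (tgen g 1),
         teq (coface phi_12 u) (Ladd (coface phi_1_2 (U c)) (coface phi_2_1 (U c)))),
      (forall c, teq (Lsub (Lsub (coface phi_12_3 (U c)) (coface phi_1_23 (U c)))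
                           (coface phi_2_13 (U c))) Lzero),
      (forall i j : 'I_g,
         teq (Lsub (Lbr (coface phi_1_23 (U (a_ i))) (tY K j i3_1))
                   (Lbr (coface phi_2_13 (U (b_ j))) (tX K i i3_0))) Lzero),
      (forall i j : 'I_g, (i < j)%N ->
         teq (Lsub (Lbr (coface phi_1_23 (U (a_ i))) (tX K j i3_1))
                   (Lbr (coface phi_2_13 (U (a_ j))) (tX K i i3_0))) Lzero
         /\ teq (Lsub (Lbr (coface phi_1_23 (U (b_ i))) (tY K j i3_1))
                      (Lbr (coface phi_2_13 (U (b_ j))) (tY K i i3_0))) Lzero) &
      teq (tsum [seq Lsub (Lbr (coface phi_1_23 (U (a_ i))) (tY K i i3_0))
                          (Lbr (coface phi_1_23 (U (b_ i))) (tX K i i3_0))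
                | i <- enum 'I_g]) Lzero].

Definition t11 (K : fieldType) g : lterm K (tgen g 2) := tT K g i2_0 i2_0.
Definition Vabc (K : fieldType) g (al be ga : abasis g) (c : abasis g)
  : lterm K (tgen g 2) :=
  if c == pdual al then
    Lscale (- pairing K al (pdual al))
      (Ladd (Lbr (zc K be) (zc K ga)) (Lscale (2 * pairing K be ga) (t11 K g)))
  else if c == pdual be then
    Lscale (pairing K be (pdual be))
      (Ladd (Lbr (zc K al) (zc K ga)) (Lscale (2 * pairing K al ga) (t11 K g)))
  else if c == pdual ga then
    Lscale (- pairing K ga (pdual ga))
      (Ladd (Lbr (zc K al) (zc K be)) (Lscale (2 * pairing K al be) (t11 K g)))
  else Lzero.

From mathcomp Require Import all_boot all_algebra ring.
From Stdlib Require Import Setoid.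
Set Implicit Arguments. Unset Strict Implicit. Unset Printing Implicit Defensive.
Import GRing.Theory.
Local Open Scope ring_scope.

(* Write W(f, h) := [z_f, z_h] + 2 <f, h> t_11.  Then
   V_c = - <alpha, c> W(beta, gamma) + <beta, c> W(alpha, gamma) - <gamma, c> W(alpha, beta),
   so every defining condition of Z_(g) is linear in the three W's.  Each W is
   primitive: a coface merging two points sends W to the sum of its copies at those
   points, since the cross brackets [z_f^(i), z_h^(j)] = - <f, h> t_ij cancel the
   off-diagonal part of the image of t_11; this gives the first two conditions.
   Bracketing W^(1) with z_d^(2) leaves only terms [z^(1), t_12], and
   [z^(1) + z^(2), t_12] = 0 when g >= 2, after which the mixed conditions reduce to
   identities between the pairings.  The last condition is, after expanding z_e in the
   dual basis, minus the Jacobi identity for z_alpha, z_beta, z_gamma. *)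

Add Parametric Relation (K : fieldType) (G : Type) (rel : lterm K G -> lterm K G -> Prop) :
  (lterm K G) (lie_eq rel)
  reflexivity proved by (@le_refl K G rel)
  symmetry proved by (@le_sym K G rel)
  transitivity proved by (@le_trans K G rel) as lie_eq_rel.

Add Parametric Morphism (K : fieldType) G rel : (@Ladd K G)
  with signature lie_eq rel ==> lie_eq rel ==> lie_eq rel as Ladd_morph.
Proof. by move=> x x' hx y y' hy; apply: le_add. Qed.

Add Parametric Morphism (K : fieldType) G rel (a : K) : (@Lscale K G a)
  with signature lie_eq rel ==> lie_eq rel as Lscale_morph.
Proof. by move=> x x' hx; apply: le_scale. Qed.

Add Parametric Morphism (K : fieldType) G rel : (@Lbr K G)
  with signature lie_eq rel ==> lie_eq rel ==> lie_eq rel as Lbr_morph.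
Proof. by move=> x x' hx y y' hy; apply: le_br. Qed.

Add Parametric Morphism (K : fieldType) G rel : (@Lsub K G)
  with signature lie_eq rel ==> lie_eq rel ==> lie_eq rel as Lsub_morph.
Proof. by move=> x x' hx y y' hy; apply: le_add => //; apply: le_scale. Qed.

#[global] Hint Resolve le_refl : core.

Section LinearLaws.
Context {K : fieldType} {G : Type} {rel : lterm K G -> lterm K G -> Prop}.
Local Notation "x ≡ y" := (lie_eq rel x y) (at level 70).
Implicit Types x y : lterm K G.

Lemma Ladd0l x : Ladd Lzero x ≡ x.
Proof. exact: le_trans (le_addC _ _ _) (le_add0 _ _). Qed.

Lemma Lscaler0 a : Lscale a Lzero ≡ Lzero.
Proof.
transitivity (Lscale a (Lscale 0 (@Lzero K G))); first by rewrite le_scale0.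
by rewrite le_scaleA mulr0 le_scale0.
Qed.

Lemma tsum_ext (I : Type) (F F' : I -> lterm K G) s :
  (forall i, F i ≡ F' i) -> tsum (map F s) ≡ tsum (map F' s).
Proof. by move=> eqF; elim: s => //= i s ->; rewrite eqF. Qed.

Lemma tsum_add (I : Type) (F F' : I -> lterm K G) s :
  tsum [seq Ladd (F i) (F' i) | i <- s] ≡ Ladd (tsum (map F s)) (tsum (map F' s)).
Proof.
elim: s => [|i s IHs] /=; first by rewrite le_add0.
rewrite IHs !le_addA; apply: le_add => //.
by rewrite -!le_addA [Ladd (F' i) _]le_addC.
Qed.

Lemma tsum_scale (I : Type) (F : I -> lterm K G) a s :
  tsum [seq Lscale a (F i) | i <- s] ≡ Lscale a (tsum (map F s)).
Proof. by elim: s => [|i s IHs] /=; rewrite ?Lscaler0 // IHs le_scaleDr. Qed.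

Lemma tsum_eq0 (I : eqType) (F : I -> lterm K G) s :
  {in s, forall i, F i ≡ Lzero} -> tsum (map F s) ≡ Lzero.
Proof.
elim: s => //= i s IHs F0.
rewrite F0 ?mem_head // IHs ?Ladd0l // => j sj.
by apply: F0; rewrite inE sj orbT.
Qed.

Lemma tsum_single (I : eqType) (F : I -> lterm K G) s k : uniq s -> k \in s ->
  {in s, forall i, i != k -> F i ≡ Lzero} -> tsum (map F s) ≡ F k.
Proof.
elim: s => //= i s IHs /andP[si us]; rewrite inE => /predU1P[->|sk] F0.
  rewrite tsum_eq0 ?le_add0 // => j sj; apply: F0; first by rewrite inE sj orbT.
  by apply: contraNneq si => <-.
have ik : i != k by apply: contraNneq si => ->.
rewrite F0 ?mem_head // IHs ?Ladd0l // => j sj; apply: F0.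
by rewrite inE sj orbT.
Qed.

End LinearLaws.

Section LinearNormalization.
Context {K : fieldType} {G : Type} {rel : lterm K G -> lterm K G -> Prop}.
Local Notation "x ≡ y" := (lie_eq rel x y) (at level 70).

Inductive lexpr :=
| LEzero
| LEatom of nat
| LEadd of lexpr & lexpr
| LEscale of K & lexpr.

Fixpoint lexpr_eval (env : seq (lterm K G)) e :=
  match e with
  | LEzero => Lzero
  | LEatom i => nth Lzero env i
  | LEadd e1 e2 => Ladd (lexpr_eval env e1) (lexpr_eval env e2)
  | LEscale a e1 => Lscale a (lexpr_eval env e1)
  end.

Fixpoint lexpr_coef e (i : nat) : K :=
  match e with
  | LEzero => 0
  | LEatom j => if Nat.eqb i j then 1 else 0
  | LEadd e1 e2 => lexpr_coef e1 i + lexpr_coef e2 i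
  | LEscale a e1 => a * lexpr_coef e1 i
  end.

Definition lincomb (env : seq (lterm K G)) (c : nat -> K) :=
  tsum [seq Lscale (c i) (nth Lzero env i) | i <- iota 0 (size env)].

Lemma lincomb_atom env j :
  lincomb env (fun i => if Nat.eqb i j then 1 else 0) ≡ nth Lzero env j.
Proof.
have [lt_j|le_j] := ltnP j (size env).
  rewrite /lincomb (tsum_single (k := j)) ?iota_uniq ?mem_iota //.
    by rewrite PeanoNat.Nat.eqb_refl le_scale1.
  by move=> i _ /eqP /PeanoNat.Nat.eqb_neq ->; rewrite le_scale0.
rewrite nth_default //; apply: tsum_eq0 => i; rewrite mem_iota add0n => /andP[_ lt_i].
have /eqP /PeanoNat.Nat.eqb_neq -> : i != j by rewrite neq_ltn (leq_trans lt_i).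
by rewrite le_scale0.
Qed.

Lemma lexpr_eval_lincomb env e : lexpr_eval env e ≡ lincomb env (lexpr_coef e).
Proof.
elim: e => [|j|e1 IH1 e2 IH2|a e1 IH1] /=.
- by rewrite /lincomb tsum_eq0 // => i _; rewrite le_scale0.
- by rewrite lincomb_atom.
- rewrite IH1 IH2 /lincomb -tsum_add.
  by apply: tsum_ext => i; rewrite le_scaleDl.
- rewrite IH1 /lincomb -tsum_scale.
  by apply: tsum_ext => i; rewrite le_scaleA.
Qed.

Fixpoint forall_below (N : nat) (P : nat -> Prop) : Prop :=
  if N is N'.+1 then forall_below N' P /\ P N' else True.

Lemma forall_belowP N P : forall_below N P -> forall i, (i < N)%N -> P i.
Proof.
elim: N => //= N IHN [PN' PN] i; rewrite ltnS leq_eqVlt => /predU1P[-> //|].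
exact: IHN.
Qed.

Lemma lexpr_eval_eq env e1 e2 :
  forall_below (size env) (fun i => lexpr_coef e1 i = lexpr_coef e2 i) ->
  lexpr_eval env e1 ≡ lexpr_eval env e2.
Proof.
move=> /forall_belowP eq_coef; rewrite !lexpr_eval_lincomb /lincomb.
suff -> : [seq Lscale (lexpr_coef e1 i) (nth Lzero env i) | i <- iota 0 (size env)] =
          [seq Lscale (lexpr_coef e2 i) (nth Lzero env i) | i <- iota 0 (size env)] by [].
by apply/eq_in_map => i; rewrite mem_iota add0n => /andP[_ /eq_coef ->].
Qed.

End LinearNormalization.

Ltac lin_mem x env :=
  match env with
  | nil => constr:(false)
  | cons x _ => constr:(true)
  | cons _ ?env' => lin_mem x env'
  end.
Ltac lin_index x env :=
  match env with
  | cons x _ => constr:(0%nat)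
  | cons _ ?env' => let k := lin_index x env' in constr:(S k)
  end.
Ltac lin_snoc env t :=
  match env with
  | nil => constr:(cons t nil)
  | cons ?h ?env' => let env'' := lin_snoc env' t in constr:(cons h env'')
  end.
Ltac lin_atoms t env :=
  match t with
  | Lzero => env
  | Lsub ?a ?b => let env' := lin_atoms a env in lin_atoms b env'
  | Ladd ?a ?b => let env' := lin_atoms a env in lin_atoms b env'
  | Lscale _ ?a => lin_atoms a env
  | _ => match lin_mem t env with true => env | false => lin_snoc env t end
  end.
Ltac lin_reify K t env :=
  match t with
  | Lzero => constr:(@LEzero K)
  | Lsub ?a ?b =>
      let r1 := lin_reify K a env in let r2 := lin_reify K b env in
      constr:(LEadd r1 (LEscale (-1) r2))
  | Ladd ?a ?b =>
      let r1 := lin_reify K a env in let r2 := lin_reify K b env in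
      constr:(LEadd r1 r2)
  | Lscale ?a ?b => let r := lin_reify K b env in constr:(LEscale a r)
  | _ => let i := lin_index t env in constr:(@LEatom K i)
  end.

(* Proves equations between linear combinations of Lie expressions, the non-linear
   subterms being treated as opaque atoms; the coefficient identities go to [ring]. *)
Ltac lin :=
  match goal with |- @lie_eq ?K ?G ?rel ?x ?y =>
    let env_x := lin_atoms x (@nil (lterm K G)) in
    let env := lin_atoms y env_x in
    let r1 := lin_reify K x env in
    let r2 := lin_reify K y env in
    change (@lie_eq K G rel (lexpr_eval env r1) (lexpr_eval env r2));
    apply: lexpr_eval_eq;
    cbv beta iota zeta delta [lexpr_coef forall_below Nat.eqb size];
    repeat split; try ring
  end.

Section LieLaws.
Context {K : fieldType} {G : Type} {rel : lterm K G -> lterm K G -> Prop}.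
Local Notation "x ≡ y" := (lie_eq rel x y) (at level 70).
Implicit Types x y z : lterm K G.

Lemma Lbr0r x : Lbr x Lzero ≡ Lzero.
Proof.
transitivity (Lbr x (Lscale 0 Lzero)); first by rewrite le_scale0.
by rewrite le_brZr le_scale0.
Qed.

Lemma Lbr0l x : Lbr Lzero x ≡ Lzero.
Proof.
transitivity (Lbr (Lscale 0 Lzero) x); first by rewrite le_scale0.
by rewrite le_brZl le_scale0.
Qed.

Lemma Lbr_antisym x y : Lbr x y ≡ Lscale (-1) (Lbr y x).
Proof.
have sq0 : Lbr (Ladd x y) (Ladd x y) ≡ Lzero by exact: le_brxx.
rewrite le_brDl !le_brDr !le_brxx in sq0.
transitivity (Lsub (Ladd (Ladd Lzero (Lbr x y)) (Ladd (Lbr y x) Lzero)) (Lbr y x)); first lin.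
by rewrite sq0; lin.
Qed.

Lemma Lbr_leibniz x y z : Lbr x (Lbr y z) ≡ Ladd (Lbr (Lbr x y) z) (Lbr y (Lbr x z)).
Proof.
have jac := le_jacobi rel x y z.
rewrite (Lbr_antisym (Lbr x y) z) (Lbr_antisym x z) le_brZr.
transitivity (Lsub (Ladd (Ladd (Lbr x (Lbr y z)) (Lbr y (Lbr z x))) (Lbr z (Lbr x y)))
                   (Ladd (Lbr y (Lbr z x)) (Lbr z (Lbr x y)))); first lin.
by rewrite jac; lin.
Qed.

Lemma jacobi_bracketl x y z :
  Ladd (Ladd (Lbr (Lbr y z) x) (Lbr (Lbr z x) y)) (Lbr (Lbr x y) z) ≡ Lzero.
Proof.
rewrite (Lbr_antisym (Lbr y z)) (Lbr_antisym (Lbr z x)) (Lbr_antisym (Lbr x y)).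
transitivity (Lscale (-1)
  (Ladd (Ladd (Lbr x (Lbr y z)) (Lbr y (Lbr z x))) (Lbr z (Lbr x y)))); first lin.
by rewrite le_jacobi Lscaler0.
Qed.

Lemma Lbr_tsumr (I : Type) (F : I -> lterm K G) s z :
  Lbr z (tsum (map F s)) ≡ tsum [seq Lbr z (F i) | i <- s].
Proof. by elim: s => [|i s IHs] /=; rewrite ?Lbr0r // le_brDr IHs. Qed.

End LieLaws.

Section Pairing.
Context {K : fieldType} {g : nat}.
Implicit Types c d e : abasis g.

Lemma pairing_skew c d : pairing K d c = - pairing K c d.
Proof.
case: c d => [k b] [l b']; rewrite /pairing /= eq_sym.
by case: (k == l); case: b; case: b'; rewrite /= ?oppr0 ?opprK.
Qed.

Lemma pairing_eq0 c d : c.1 != d.1 -> pairing K c d = 0.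
Proof. by rewrite /pairing => /negbTE ->. Qed.

Lemma pairing_ndual e c : c != pdual e -> pairing K e c = 0.
Proof.
case: e c => [k b] [l b']; rewrite /pairing /pdual /= => ne_c.
case: (eqVneq k l) => [ekl|] //=; rewrite -ekl in ne_c.
by case: b b' ne_c => [] []; rewrite ?eqxx.
Qed.

Lemma pdual_inj : injective (@pdual g).
Proof. by move=> [k b] [l b'] [-> /negb_inj ->]. Qed.

Lemma tsum_dual_basis {G : Type} {rel : lterm K G -> lterm K G -> Prop}
    (F : abasis g -> lterm K G) e :
  lie_eq rel (tsum [seq Ladd (Lscale (pairing K e (a_ k)) (F (b_ k)))
                            (Lscale (- pairing K e (b_ k)) (F (a_ k))) | k <- enum 'I_g])
             (F e).
Proof.
rewrite (tsum_single (k := e.1)) ?enum_uniq ?mem_enum //.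
  case: e => k [] /=; rewrite /pairing /= eqxx /=;
    [rewrite -[(k, true)]/(b_ k) | rewrite -[(k, false)]/(a_ k)]; lin.
move=> k _ ne_k; rewrite !pairing_eq0 1?eq_sym // oppr0 !le_scale0; lin.
Qed.

End Pairing.

(* [zcn K c i] is z_c^{(i)} in t_(g)(n); [zc K c] is [zcn K c i2_0] by conversion. *)
Definition zcn (K : fieldType) g n (c : abasis g) (i : 'I_n) : lterm K (tgen g n) :=
  if c.2 then tY K c.1 i else tX K c.1 i.

Section TRelations.
Context {K : fieldType} {g n : nat}.
Local Notation "x ≡ y" := (lie_eq (@trel K g n) x y) (at level 70).
Local Notation z := (zcn K).
Local Notation t := (tT K g).
Implicit Types c d e f h : abasis g.

Lemma tT_sym i j : t i j ≡ t j i.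
Proof. exact/le_rel/tr_sym. Qed.

Lemma Lbr_tTii_zcn i d j : Lbr (t i i) (z d j) ≡ Lzero.
Proof. by rewrite /zcn; case: ifP => _; apply/le_rel/tr_central. Qed.

Lemma Lbr_zcn_tTii i d j : Lbr (z d j) (t i i) ≡ Lzero.
Proof. by rewrite Lbr_antisym Lbr_tTii_zcn Lscaler0. Qed.

Lemma Lbr_zcn_zcn c d (i j : 'I_n) : i != j ->
  Lbr (z c i) (z d j) ≡ Lscale (- pairing K c d) (t i j).
Proof.
move=> ne_ij; have ne_ji : j != i by rewrite eq_sym.
case: c d => [k [|]] [l [|]]; rewrite /zcn /pairing /=;
  case: (eqVneq k l) => [<-|ne_kl] /=; rewrite ?oppr0 ?opprK ?le_scale0 ?le_scale1.
- exact/le_rel/tr_yy.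
- exact/le_rel/tr_yy.
- by rewrite Lbr_antisym (le_rel (tr_xyT K k ne_ji)) tT_sym.
- by rewrite Lbr_antisym (le_rel (tr_xy K ne_ji _)) 1?eq_sym // Lscaler0.
- exact/le_rel/tr_xyT.
- exact/le_rel/tr_xy.
- exact/le_rel/tr_xx.
- exact/le_rel/tr_xx.
Qed.

Lemma Lbr_Lbr_zcn f h d (i j : 'I_n) : i != j ->
  Lbr (Lbr (z f i) (z h i)) (z d j)
  ≡ Ladd (Lscale (- pairing K h d) (Lbr (z f i) (t i j)))
         (Lscale (pairing K f d) (Lbr (z h i) (t i j))).
Proof.
move=> ne_ij; have ne_ji : j != i by rewrite eq_sym.
rewrite (Lbr_antisym (Lbr _ _)) Lbr_leibniz !Lbr_zcn_zcn // le_brZl le_brZr.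
rewrite (Lbr_antisym (t j i)) tT_sym (pairing_skew f d) (pairing_skew h d); lin.
Qed.

Lemma Lbr_zcn_tT_disjoint e (i j l : 'I_n) : (2 <= g)%N ->
  [&& i != j, i != l & j != l] -> Lbr (z e i) (t j l) ≡ Lzero.
Proof.
move=> g2 /and3P[ne_ij ne_il ne_jl].
(* t_jl = [x_k^(j), y_k^(l)] for every k, and both brackets of z_e^(i) with these
   vanish as soon as k differs from e.1. *)
have [k ne_k] : exists k : 'I_g, e.1 != k.
  have [e0|e_ne0] := eqVneq (val e.1) 0%N.
    by exists (Ordinal g2); rewrite -val_eqE /= e0.
  by exists (Ordinal (ltnW g2)); rewrite -val_eqE.
rewrite -(le_rel (tr_xyT K k ne_jl)) -[tX K k j]/(z (a_ k) j) -[tY K k l]/(z (b_ k) l).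
rewrite Lbr_leibniz !Lbr_zcn_zcn // !pairing_eq0 // oppr0 !le_scale0 Lbr0l Lbr0r.
exact: le_add0.
Qed.

Lemma Lbr_zcn_sum_xy e (i j : 'I_n) : i != j ->
  tsum [seq Lbr (z e i) (Lbr (tX K k j) (tY K k j)) | k <- enum 'I_g]
  ≡ Lbr (z e j) (t i j).
Proof.
move=> ne_ij; apply: le_trans (tsum_dual_basis (fun d => Lbr (z d j) (t i j)) e).
apply: tsum_ext => k /=.
rewrite -[tX K k j]/(z (a_ k) j) -[tY K k j]/(z (b_ k) j).
rewrite Lbr_leibniz !Lbr_zcn_zcn // le_brZl le_brZr (Lbr_antisym (t i j)); lin.
Qed.

(* Bracket the defining relation of [sum_k [x_k^(j), y_k^(j)]] with [z_e^(i)]. *)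
Lemma Lbr_zcn_tT_swap e (i j : 'I_n) : (2 <= g)%N -> i != j ->
  Lbr (z e j) (t i j) ≡ Lscale (-1) (Lbr (z e i) (t i j)).
Proof.
move=> g2 ne_ij.
have diag := le_br (le_refl _ (z e i)) (le_rel (tr_diag K g j)).
rewrite Lbr_tsumr Lbr_zcn_sum_xy // le_brDr !le_brZr Lbr_tsumr Lbr_zcn_tTii in diag.
have off_diag : tsum [seq Lbr (z e i) (t j l) | l <- enum 'I_n & l != j]
                ≡ Lbr (z e i) (t j i).
  apply: tsum_single; first exact/filter_uniq/enum_uniq.
    by rewrite mem_filter ne_ij mem_enum.
  move=> l; rewrite mem_filter => /andP[ne_lj _] ne_li.
  by apply: Lbr_zcn_tT_disjoint; rewrite // ne_ij eq_sym ne_li eq_sym ne_lj.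
by rewrite diag off_diag tT_sym; lin.
Qed.

End TRelations.

(* The entries of [Vabc] are multiples of [wedge K f h i2_0]. *)
Definition wedge (K : fieldType) g n (f h : abasis g) (i : 'I_n) : lterm K (tgen g n) :=
  Ladd (Lbr (zcn K f i) (zcn K h i)) (Lscale (2 * pairing K f h) (tT K g i i)).

Section Wedge.
Context {K : fieldType} {g n : nat}.
Local Notation "x ≡ y" := (lie_eq (@trel K g n) x y) (at level 70).
Local Notation z := (zcn K).
Local Notation t := (tT K g).
Implicit Types d f h : abasis g.

Lemma Lbr_wedge_zcn f h d (i j : 'I_n) : i != j ->
  Lbr (wedge K f h i) (z d j)
  ≡ Ladd (Lscale (- pairing K h d) (Lbr (z f i) (t i j)))
         (Lscale (pairing K f d) (Lbr (z h i) (t i j))).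
Proof.
move=> ne_ij; rewrite le_brDl le_brZl Lbr_tTii_zcn Lscaler0 le_add0.
exact: Lbr_Lbr_zcn.
Qed.

Lemma Lbr_wedge_zcn_diag f h d (i : 'I_n) :
  Lbr (wedge K f h i) (z d i) ≡ Lbr (Lbr (z f i) (z h i)) (z d i).
Proof. by rewrite le_brDl le_brZl Lbr_tTii_zcn Lscaler0 le_add0. Qed.

End Wedge.

Section CofaceWedge.
Context {K : fieldType} {g m n : nat} (phi : 'I_m -> 'I_n).
Local Notation "x ≡ y" := (lie_eq (@trel K g m) x y) (at level 70).
Implicit Types f h : abasis g.

Lemma cofaceD (x y : lterm K (tgen g n)) :
  coface phi (Ladd x y) = Ladd (coface phi x) (coface phi y).
Proof. by []. Qed.

Lemma cofaceZ a (x : lterm K (tgen g n)) : coface phi (Lscale a x) = Lscale a (coface phi x).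
Proof. by []. Qed.

Lemma coface_zcn f k :
  coface phi (zcn K f k) = tsum [seq zcn K f i | i <- enum 'I_m & phi i == k].
Proof. by case: f => l []. Qed.

Lemma filter_fibre_neq k i :
  [seq j <- enum 'I_m | (phi j == k) && (j != i)]
  = [seq j <- [seq j <- enum 'I_m | phi j == k] | j != i].
Proof. by rewrite -[in RHS]filter_predI; apply: eq_filter => j /=; rewrite andbC. Qed.

Lemma coface_wedge_fibre1 f h k i :
  [seq j <- enum 'I_m | phi j == k] = [:: i] ->
  coface phi (wedge K f h k) ≡ wedge K f h i.
Proof.
move=> fibre; rewrite /wedge /coface /= eqxx -!/(coface _ _) !coface_zcn fibre /=.
rewrite filter_fibre_neq fibre /= eqxx /= !le_add0; lin.
Qed.

(* The cross terms [z_f^(i), z_h^(j)] = - <f, h> t_ij cancel against the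
   off-diagonal part (t_ij + t_ji) / 2 of the image of t_kk. *)
Lemma coface_wedge_fibre2 f h k i j : (2%:R : K) != 0 -> i != j ->
  [seq l <- enum 'I_m | phi l == k] = [:: i; j] ->
  coface phi (wedge K f h k) ≡ Ladd (wedge K f h i) (wedge K f h j).
Proof.
move=> two_ne0 ne_ij fibre; have ne_ji : j != i by rewrite eq_sym.
rewrite /wedge /coface /= eqxx -!/(coface _ _) !coface_zcn fibre /=.
rewrite !filter_fibre_neq fibre /= !eqxx ne_ij ne_ji /=.
rewrite !le_brDl !le_brDr !Lbr0l !Lbr0r (Lbr_zcn_zcn _ _ ne_ij) (Lbr_zcn_zcn _ _ ne_ji).
lin; field; exact: two_ne0.
Qed.

End CofaceWedge.

Lemma i3_1E : i3_1 = Ordinal (isT : (1 < 3)%N).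
Proof. exact/val_inj/inordK. Qed.

Lemma i3_01 : i3_0 != i3_1. Proof. by rewrite i3_1E. Qed.
Lemma i3_10 : i3_1 != i3_0. Proof. by rewrite i3_1E. Qed.
Lemma i2_01 : i2_0 != i2_1. Proof. by []. Qed.

Lemma enum3 : enum 'I_3 = [:: i3_0; i3_1; i3_2].
Proof. by apply: (inj_map val_inj); rewrite val_enum_ord i3_1E. Qed.

Lemma enum2 : enum 'I_2 = [:: i2_0; i2_1].
Proof. by apply: (inj_map val_inj); rewrite val_enum_ord. Qed.

Lemma fibre_phi_12 : [seq i <- enum 'I_2 | phi_12 i == ord0] = [:: i2_0; i2_1].
Proof. by rewrite enum2. Qed.
Lemma fibre_phi_1_2 : [seq i <- enum 'I_2 | phi_1_2 i == i2_0] = [:: i2_0].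
Proof. by rewrite enum2. Qed.
Lemma fibre_phi_2_1 : [seq i <- enum 'I_2 | phi_2_1 i == i2_0] = [:: i2_1].
Proof. by rewrite enum2. Qed.
Lemma fibre_phi_12_3 : [seq i <- enum 'I_3 | phi_12_3 i == i2_0] = [:: i3_0; i3_1].
Proof. by rewrite enum3 /phi_12_3 i3_1E. Qed.
Lemma fibre_phi_1_23 : [seq i <- enum 'I_3 | phi_1_23 i == i2_0] = [:: i3_0].
Proof. by rewrite enum3 /phi_1_23 i3_1E. Qed.
Lemma fibre_phi_2_13 : [seq i <- enum 'I_3 | phi_2_13 i == i2_0] = [:: i3_1].
Proof. by rewrite enum3 /phi_2_13 i3_1E. Qed.

Section Vabc.
Context {K : fieldType} {g : nat} (al be ga : abasis g).
Hypotheses (ne_ab : al != be) (ne_ag : al != ga) (ne_bg : be != ga).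
Local Notation z := (zcn K).
Local Notation V := (Vabc K al be ga).

Lemma coface_Vabc m (phi : 'I_m -> 'I_2) c :
  lie_eq (@trel K g m) (coface phi (V c))
    (Ladd (Ladd (Lscale (- pairing K al c) (coface phi (wedge K be ga i2_0)))
                (Lscale (pairing K be c) (coface phi (wedge K al ga i2_0))))
          (Lscale (- pairing K ga c) (coface phi (wedge K al be i2_0)))).
Proof.
have ndual (x y : abasis g) : x != y -> pdual x != pdual y by rewrite (inj_eq pdual_inj).
have -> : coface phi (V c) =
  if c == pdual al then Lscale (- pairing K al (pdual al)) (coface phi (wedge K be ga i2_0))
  else if c == pdual be then Lscale (pairing K be (pdual be)) (coface phi (wedge K al ga i2_0))
  else if c == pdual ga then Lscale (- pairing K ga (pdual ga)) (coface phi (wedge K al be i2_0))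
  else Lzero by rewrite /Vabc; case: ifP => // _; case: ifP => // _; case: ifP.
case: eqVneq => [->|ne_a].
  by rewrite (pairing_ndual (ndual _ _ ne_ab)) (pairing_ndual (ndual _ _ ne_ag)); lin.
case: eqVneq => [->|ne_b].
  by rewrite (pairing_ndual (ndual _ _ ne_bg)) (pairing_ndual (ndual be al _)) 1?eq_sym //; lin.
case: eqVneq => [->|ne_g].
  rewrite (pairing_ndual (ndual ga al _)) 1?eq_sym //.
  by rewrite (pairing_ndual (ndual ga be _)) 1?eq_sym //; lin.
by rewrite !pairing_ndual //; lin.
Qed.

Lemma Vabc_cond_sym : (2%:R : K) != 0 -> forall c, exists u : lterm K (tgen g 1),
  lie_eq (@trel K g 2) (coface phi_12 u)
    (Ladd (coface phi_1_2 (V c)) (coface phi_2_1 (V c))).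
Proof.
move=> two_ne0 c.
exists (Ladd (Ladd (Lscale (- pairing K al c) (wedge K be ga ord0))
                   (Lscale (pairing K be c) (wedge K al ga ord0)))
             (Lscale (- pairing K ga c) (wedge K al be ord0))).
rewrite !coface_Vabc 2!cofaceD 3!cofaceZ.
rewrite !(coface_wedge_fibre2 _ _ two_ne0 i2_01 fibre_phi_12).
rewrite !(coface_wedge_fibre1 _ _ fibre_phi_1_2) !(coface_wedge_fibre1 _ _ fibre_phi_2_1).
lin.
Qed.

Lemma Vabc_cond_coproduct : (2%:R : K) != 0 -> forall c,
  lie_eq (@trel K g 3)
    (Lsub (Lsub (coface phi_12_3 (V c)) (coface phi_1_23 (V c))) (coface phi_2_13 (V c)))
    Lzero.
Proof.
move=> two_ne0 c; rewrite !coface_Vabc.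
rewrite !(coface_wedge_fibre2 _ _ two_ne0 i3_01 fibre_phi_12_3).
rewrite !(coface_wedge_fibre1 _ _ fibre_phi_1_23) !(coface_wedge_fibre1 _ _ fibre_phi_2_13).
lin.
Qed.

Lemma Vabc_cond_mixed : (2 <= g)%N -> forall c d,
  lie_eq (@trel K g 3)
    (Lsub (Lbr (coface phi_1_23 (V c)) (z d i3_1))
          (Lbr (coface phi_2_13 (V d)) (z c i3_0)))
    Lzero.
Proof.
move=> g2 c d; rewrite !coface_Vabc !le_brDl !le_brZl.
rewrite !(coface_wedge_fibre1 _ _ fibre_phi_1_23) !(coface_wedge_fibre1 _ _ fibre_phi_2_13).
rewrite !(Lbr_wedge_zcn _ _ _ i3_01) !(Lbr_wedge_zcn _ _ _ i3_10) (tT_sym i3_1 i3_0).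
rewrite !(Lbr_zcn_tT_swap _ g2 i3_01); lin.
Qed.

Lemma Vabc_cond_trace :
  lie_eq (@trel K g 3)
    (tsum [seq Lsub (Lbr (coface phi_1_23 (V (a_ i))) (tY K i i3_0))
                    (Lbr (coface phi_1_23 (V (b_ i))) (tX K i i3_0)) | i <- enum 'I_g])
    Lzero.
Proof.
pose X (f h : abasis g) := Lbr (z f i3_0) (z h i3_0).
pose D (e : abasis g) (Y : lterm K (tgen g 3)) (k : 'I_g) :=
  Ladd (Lscale (pairing K e (a_ k)) (Lbr Y (z (b_ k) i3_0)))
       (Lscale (- pairing K e (b_ k)) (Lbr Y (z (a_ k) i3_0))).
have per_index k :
  lie_eq (@trel K g 3)
    (Lsub (Lbr (coface phi_1_23 (V (a_ k))) (tY K k i3_0))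
          (Lbr (coface phi_1_23 (V (b_ k))) (tX K k i3_0)))
    (Ladd (Ladd (Lscale (-1) (D al (X be ga) k)) (D be (X al ga) k))
          (Lscale (-1) (D ga (X al be) k))).
  rewrite -[tY K k i3_0]/(z (b_ k) i3_0) -[tX K k i3_0]/(z (a_ k) i3_0) /D /X.
  rewrite !coface_Vabc !le_brDl !le_brZl !(coface_wedge_fibre1 _ _ fibre_phi_1_23).
  rewrite !Lbr_wedge_zcn_diag; lin.
apply: le_trans (tsum_ext _ per_index) _.
rewrite 2!tsum_add 2!tsum_scale /D.
rewrite (tsum_dual_basis (fun d => Lbr (X be ga) (z d i3_0))).
rewrite (tsum_dual_basis (fun d => Lbr (X al ga) (z d i3_0))).
rewrite (tsum_dual_basis (fun d => Lbr (X al be) (z d i3_0))) /X.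
rewrite (Lbr_antisym (z al i3_0) (z ga i3_0)) le_brZl.
rewrite -(Lscaler0 (-1)) -(jacobi_bracketl (z al i3_0) (z be i3_0) (z ga i3_0)); lin.
Qed.

End Vabc.

Theorem lemma11p10 (K : fieldType) (hK : [pchar K]%R =i pred0) (g : nat)
  (hg : (2 <= g)%N) (al be ga : abasis g)
  (hab : al != be) (hag : al != ga) (hbg : be != ga) :
  inZ (Vabc K al be ga).
Proof.
have two_ne0 : (2%:R : K) != 0 by rewrite (pcharf0P K).1.
split.
- exact: Vabc_cond_sym.
- exact: Vabc_cond_coproduct.
- by move=> i j; exact: (Vabc_cond_mixed hab hag hbg hg (a_ i) (b_ j)).
- move=> i j _; split.
  + exact: (Vabc_cond_mixed hab hag hbg hg (a_ i) (a_ j)).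
  + exact: (Vabc_cond_mixed hab hag hbg hg (b_ i) (b_ j)).
- exact: Vabc_cond_trace.
Qed.
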